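(* In the setting described in the context, let $\mathfrak h$ be the single-electron space spanned by $c^\dagger_{r,\uparrow}\Phi_{\rm vac}$, $r\in\Lambda$, and let $\mathfrak h_{\rm L}$ (resp. $\mathfrak h_{\rm U}$) be the subspace spanned by $a^\dagger_{x,\uparrow}\Phi_{\rm vac}$, $x\in\mathcal{E}$ (resp. $b^\dagger_{u,\uparrow}\Phi_{\rm vac}$, $u\in\mathcal{I}$), so that $\mathfrak h=\mathfrak h_{\rm L}\oplus\mathfrak h_{\rm U}$. Then $H$ can be diagonalized within $\mathfrak h_{\rm L}$ and within $\mathfrak h_{\rm U}$ respectively (each is invariant under $H$). Every eigenvalue $\epsilon$ of $H$ in $\mathfrak h_{\rm L}$ satisfies $$-s\{1+(m+\ell_{\rm L})\nu^2\}\le\epsilon\le\min\{0,-s\{1+(m-\ell_{\rm L})\nu^2\}\},$$ and every eigenvalue $\epsilon$ of $H$ in $\mathfrak h_{\rm U}$ satisfies $$\max\{0,t\{1+(n-\ell_{\rm U})\nu^2\}\}\le\epsilon\le t\{1+(n+\ell_{\rm U})\nu^2\}.$$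
   Context: Lattice: fix integers $n,m\ge2$. A basic cell is a set of $n+1$ sites $\{u,x_1,\dots,x_n\}$ ($u$ internal, $x_i$ external). $\Lambda$ is formed from $M$ copies of the basic cell by identifying external sites from $m$ distinct cells as a single site (each external site lies in exactly $m$ cells); internal sites are not identified; $\Lambda$ is connected. $\mathcal{I},\mathcal{E}$ are the sets of internal and external sites; $C_u$ is the cell containing $u\in\mathcal{I}$; $\Lambda_x$ is the union of the $m$ cells containing $x\in\mathcal{E}$. Fermion operators $c_{r,\sigma}$ satisfy canonical anticommutation relations on the Fock space with vacuum $\Phi_{\rm vac}$; $n_{r,\sigma}=c^\dagger_{r,\sigma}c_{r,\sigma}$. Parameters $t,s,U,\nu>0$. $a_{x,\sigma}=c_{x,\sigma}-\nu\sum_{u\in\Lambda_x\cap\mathcal{I}}c_{u,\sigma}$ ($x\in\mathcal{E}$), $b_{u,\sigma}=c_{u,\sigma}+\nu\sum_{x\in C_u\setminus\{u\}}c_{x,\sigma}$ ($u\in\mathcal{I}$). $H=-s\sum_{x\in\mathcal{E},\sigma}a^\dagger_{x,\sigma}a_{x,\sigma}+t\sum_{u\in\mathcal{I},\sigma}b^\dagger_{u,\sigma}b_{u,\sigma}+U\sum_{r\in\Lambda}n_{r,\uparrow}n_{r,\downarrow}$. For $x,y\in\mathcal{E}$, $\ell_{x,y}=|\Lambda_x\cap\Lambda_y\cap\mathcal{I}|$ (number of cells containing both); for $u,v\in\mathcal{I}$, $\ell_{u,v}=|C_u\cap C_v\cap\mathcal{E}|$. $\ell_{\rm L}=\sum_{y\in\mathcal{E},y\ne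 x}\ell_{x,y}$ for $x\in\mathcal{E}$ and $\ell_{\rm U}=\sum_{v\in\mathcal{I},v\ne u}\ell_{u,v}$ for $u\in\mathcal{I}$ (these do not depend on the choice of $x$, resp. $u$). *)

From HB Require Import structures.
From mathcomp Require Import all_boot all_order all_algebra.
From mathcomp Require Import complex.
Set Implicit Arguments. Unset Strict Implicit. Unset Printing Implicit Defensive.
Import Order.TTheory GRing.Theory Num.Theory.
Local Open Scope ring_scope.

Section Hubbard.
Variable R : rcfType.
(* I = internal sites (one per cell), E = external sites;
   inc u x <=> the external site x belongs to the cell C_u. *)
Variables (I E : finType) (inc : I -> E -> bool).

(* The lattice Lambda = I (+) E, modes = site * spin (true = up). *)
Definition site := (I + E)%type.
Definition mode := (site * bool)%type.

Definition adj : rel site := fun p q =>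
  match p, q with
  | inl u, inr x => inc u x
  | inr x, inl u => inc u x
  | _, _ => false
  end.

(* Fock space over the complex numbers R[i]: functions on occupation sets. *)
Definition fock := {ffun {set mode} -> R[i]}.

(* Jordan-Wigner sign w.r.t. the canonical order (enum_rank) of modes. *)
Definition jwsign (j : mode) (S : {set mode}) : R[i] :=
  (-1) ^+ #|[set k in S | (enum_rank k < enum_rank j)%N]|.

(* annihilation / creation operators: basis |S> = prod_{k in S, increasing} c_k^dag |vac> *)
Definition cop (j : mode) (psi : fock) : fock :=
  [ffun S : {set mode} => if j \in S then 0 else jwsign j S * psi (j |: S)].
Definition cdag (j : mode) (psi : fock) : fock :=
  [ffun S : {set mode} => if j \in S then jwsign j (S :\ j) * psi (S :\ j) else 0].
Definition numop (j : mode) (psi : fock) : fock := cdag j (cop j psi).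
Definition vac : fock := [ffun S : {set mode} => (S == set0)%:R].

Variables (nu : R).

Definition aop (x : E) (sg : bool) (psi : fock) : fock :=
  cop (inr x, sg) psi - (nu%:C)%C *: \sum_(u | inc u x) cop (inl u, sg) psi.
Definition adag (x : E) (sg : bool) (psi : fock) : fock :=
  cdag (inr x, sg) psi - (nu%:C)%C *: \sum_(u | inc u x) cdag (inl u, sg) psi.
Definition bop (u : I) (sg : bool) (psi : fock) : fock :=
  cop (inl u, sg) psi + (nu%:C)%C *: \sum_(x | inc u x) cop (inr x, sg) psi.
Definition bdag (u : I) (sg : bool) (psi : fock) : fock :=
  cdag (inl u, sg) psi + (nu%:C)%C *: \sum_(x | inc u x) cdag (inr x, sg) psi.

Variables (t s U : R).

Definition Ham (psi : fock) : fock :=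
  - ((s%:C)%C) *: \sum_(x : E) \sum_(sg : bool) adag x sg (aop x sg psi)
  + (t%:C)%C *: \sum_(u : I) \sum_(sg : bool) bdag u sg (bop u sg psi)
  + (U%:C)%C *: \sum_(r : site) numop (r, true) (numop (r, false) psi).

Definition in_h (psi : fock) : Prop :=
  exists f : site -> R[i], psi = \sum_(r : site) f r *: cdag (r, true) vac.
Definition in_hL (psi : fock) : Prop :=
  exists f : E -> R[i], psi = \sum_(x : E) f x *: adag x true vac.
Definition in_hU (psi : fock) : Prop :=
  exists f : I -> R[i], psi = \sum_(u : I) f u *: bdag u true vac.

Definition diag_within (P : fock -> Prop) : Prop :=
  exists (k : nat) (v : 'I_k -> fock) (e : 'I_k -> R[i]),
    (forall i, P (v i) /\ Ham (v i) = e i *: v i) /\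
    (forall psi, P psi -> exists g : 'I_k -> R[i], psi = \sum_i g i *: v i).

Definition eigval_within (P : fock -> Prop) (eps : R[i]) : Prop :=
  exists psi, P psi /\ psi <> 0 /\ Ham psi = eps *: psi.

End Hubbard.

Definition ellE (I E : finType) (inc : I -> E -> bool) (x y : E) : nat :=
  #|[set u | inc u x && inc u y]|.
Definition ellI (I E : finType) (inc : I -> E -> bool) (u v : I) : nat :=
  #|[set x | inc u x && inc v x]|.
Definition ellL (I E : finType) (inc : I -> E -> bool) (x : E) : nat :=
  (\sum_(y : E | y != x) ellE inc x y)%N.
Definition ellU (I E : finType) (inc : I -> E -> bool) (u : I) : nat :=
  (\sum_(v : I | v != u) ellI inc u v)%N.

(* A one-electron state with wave function f : site -> C is [ket f], the sum of
   the f r c^dag_{r,up} Phi_vac.  The Hubbard term kills such states, a_{x,s} and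
   b_{u,s} map them to multiples of Phi_vac, and a^dag_{x,up} Phi_vac,
   b^dag_{u,up} Phi_vac are the kets of real wave functions alpha_x, beta_u with
   <alpha_x, beta_u> = 0.  So H = -s sum_x |alpha_x><alpha_x| + t sum_u |beta_u><beta_u|
   on one electron: in the bases (alpha_x) and (beta_u) it acts on coefficients as
   -s G_L and t G_U, where G_L(y, x) = delta_xy + nu^2 l_xy and G_U are real symmetric
   Gram matrices, whence invariance and diagonalisability.  The quadratic form of
   G_L is |g|^2 + nu^2 sum_u |sum_{x in C_u} g_x|^2, so its eigenvalues are >= 1;
   in particular G_L and G_U are invertible, so the |I| + |E| vectors alpha_x,
   beta_u are independent and span h.  Each row of G_L has diagonal entry
   1 + m nu^2 and off-diagonal sum nu^2 l_L (double counting gives l_L = m (n - 1)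
   for every x), so Gershgorin's theorem confines the eigenvalues to
   [1 + (m - l_L) nu^2, 1 + (m + l_L) nu^2]; likewise for G_U. *)

From HB Require Import structures.
From mathcomp Require Import all_boot all_order all_algebra.
From mathcomp Require Import complex sesquilinear spectral.
Import Order.TTheory GRing.Theory Num.Theory.
Set Implicit Arguments.
Unset Strict Implicit.
Unset Printing Implicit Defensive.
Local Open Scope ring_scope.

(** * Linear algebra over finite index types *)

Lemma sum_mul_delta (C : pzSemiRingType) (T : finType) (c : T -> C) y :
  \sum_x c x * (x == y)%:R = c y.
Proof.
rewrite (bigD1 y) //= eqxx mulr1 big1 ?addr0 // => x /negbTE->.
by rewrite mulr0.
Qed.

Lemma sum_delta_mul (C : pzSemiRingType) (T : finType) (c : T -> C) y :
  \sum_x (y == x)%:R * c x = c y.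
Proof.
rewrite (bigD1 y) //= eqxx mul1r big1 ?addr0 // => x; rewrite eq_sym => /negbTE->.
by rewrite mul0r.
Qed.

Lemma sum_cond_delta (C : pzSemiRingType) (T : finType) (P : pred T) y :
  \sum_(x | P x) (y == x)%:R = (P y)%:R :> C.
Proof.
rewrite big_mkcond (bigD1 y) //= eqxx big1 ?addr0; first by case: (P y).
by move=> x; rewrite eq_sym => /negbTE->; case: (P x).
Qed.

Lemma card_set_sum (W : finType) (P : pred W) : #|[set w | P w]| = (\sum_w P w)%N.
Proof. by rewrite -sum1_card big_mkcond; apply: eq_bigr => w _; rewrite inE. Qed.

Lemma real_symmetric_eigenbasis (C : numClosedFieldType) (T : finType)
    (M : T -> T -> C) :
  (forall x y, M x y = M y x) -> (forall x y, M x y \is Num.real) ->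
  exists k (w : 'I_k -> T -> C) (d : 'I_k -> C),
    (forall i y, \sum_x M y x * w i x = d i * w i y) /\
    (forall g : T -> C, exists c : 'I_k -> C, forall x, g x = \sum_i c i * w i x).
Proof.
move=> Msym Mreal.
pose A : 'M[C]_#|T| := \matrix_(i, j) M (enum_val i) (enum_val j).
have An : A \is normalmx.
  apply: symmetric_normalmx; last by apply/mxOverP => i j; rewrite mxE.
  apply/is_hermitianmxP; rewrite expr0 scale1r map_mx_id //.
  by apply/matrixP => i j; rewrite !mxE Msym.
have /orthomx_spectralP AE := An.
set P := spectralmx A in AE; set D := spectral_diag A in AE.
have Pu : P \in unitmx by apply: spectral_unit.
have PA : P *m A = diag_mx D *m P by rewrite {1}AE !mulmxA mulmxV // mul1mx.
exists #|T|, (fun i x => P i (enum_rank x)), (fun i => D 0 i); split.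
  move=> i y; move/matrixP: PA => /(_ i (enum_rank y)).
  rewrite mul_diag_mx !mxE => <-.
  rewrite (reindex (@enum_rank T)) /=; last first.
    by exists enum_val => z _; rewrite ?enum_rankK ?enum_valK.
  by apply: eq_bigr => x _; rewrite /A mxE !enum_rankK Msym mulrC.
move=> g; pose v : 'rV[C]_#|T| := \row_j g (enum_val j).
exists (fun i => (v *m invmx P) 0 i) => x.
move/matrixP: (mulmxKV Pu v) => /(_ 0 (enum_rank x)).
by rewrite !mxE enum_rankK => <-.
Qed.

Lemma free_family_spans (C : fieldType) (T : finType) (b : T -> T -> C) :
  (forall c : T -> C, (forall r, \sum_q c q * b q r = 0) -> forall q, c q = 0) ->
  forall f : T -> C, exists c : T -> C, forall r, f r = \sum_q c q * b q r.
Proof.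
move=> free f.
pose M : 'M[C]_#|T| := \matrix_(i, j) b (enum_val i) (enum_val j).
have mulME (v : 'rV[C]_#|T|) r :
    (v *m M) 0 (enum_rank r) = \sum_q v 0 (enum_rank q) * b q r.
  rewrite mxE (reindex (@enum_rank T)) /=; last first.
    by exists enum_val => z _; rewrite ?enum_rankK ?enum_valK.
  by apply: eq_bigr => q _; rewrite mxE !enum_rankK.
have Mu : M \in unitmx.
  rewrite -row_free_unit; apply: inj_row_free => v vM0; apply/rowP => i.
  rewrite mxE -(enum_valK i); apply: (free (fun q => v 0 (enum_rank q))) => r.
  by rewrite -mulME vM0 mxE.
pose v : 'rV[C]_#|T| := \row_j f (enum_val j).
exists (fun q => (v *m invmx M) 0 (enum_rank q)) => r.
by rewrite -mulME mulmxKV // mxE enum_rankK.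
Qed.

Lemma gershgorin (C : numDomainType) (T : finType) (M : T -> T -> C)
    (g : T -> C) (lam : C) :
  (forall y, \sum_x M y x * g x = lam * g y) -> (exists y, g y != 0) ->
  exists y, `|lam - M y y| <= \sum_(x | x != y) `|M y x|.
Proof.
move=> eig [y0 gy0].
have [y _ ymax] := @comparable_arg_maxP _ _ T y0 predT (fun x => `|g x|) erefl
  (fun i j _ _ => real_comparable (normr_real _) (normr_real _)).
exists y; have gy : 0 < `|g y| by apply: lt_le_trans (ymax y0 erefl); rewrite normr_gt0.
rewrite -(ler_pM2r gy) -normrM mulrBl -eig (bigD1 y) //= addrAC subrr add0r.
rewrite mulr_suml; apply: le_trans (ler_norm_sum _ _ _) _; apply: ler_sum => x _.
by rewrite normrM; apply: ler_wpM2l; [exact: normr_ge0 | exact: ymax].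
Qed.

(** * Gram matrices of incidence structures *)

Section Incidence.
Variables (T W : finType) (J : W -> T -> bool).

(* [overlap inc] is [ellE inc], and [overlap (fun x u => inc u x)] is [ellI inc]. *)
Definition overlap (y x : T) : nat := #|[set w | J w y && J w x]|.

Lemma overlap_row_sum k k' :
  (forall y, #|[set w | J w y]| = k) -> (forall w, #|[set x | J w x]| = k') ->
  forall y, (\sum_(x | x != y) overlap y x)%N = (k * k'.-1)%N.
Proof.
move=> col row y; rewrite /overlap.
under eq_bigr do rewrite card_set_sum.
rewrite exchange_big /= (eq_bigr (fun w => J w y * k'.-1)%N).
  by rewrite -big_distrl /= -card_set_sum col.
move=> w _; case Jwy: (J w y); last by rewrite big1.
by rewrite mul1n -(row w) card_set_sum [in RHS](bigD1 y) //= Jwy add1n.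
Qed.

End Incidence.

Section Gram.
Variables (C : numClosedFieldType) (T W : finType) (J : W -> T -> bool) (c : C).

Definition gram (y x : T) : C := (x == y)%:R + c * (overlap J y x)%:R.

Lemma gram_sym y x : gram y x = gram x y.
Proof.
rewrite /gram /overlap eq_sym; congr (_ + _ * _%:R); apply: eq_card => w.
by rewrite !inE andbC.
Qed.

Lemma gram_real : c \is Num.real -> forall y x, gram y x \is Num.real.
Proof. by move=> c_real y x; rewrite rpredD ?rpredM ?realn. Qed.

Lemma gram_mulE (g : T -> C) y :
  \sum_x gram y x * g x = g y + c * \sum_w (J w y)%:R * \sum_x (J w x)%:R * g x.
Proof.
under eq_bigr do rewrite mulrDl -mulrA.
rewrite big_split /= -mulr_sumr; congr (_ + c * _).
  rewrite (bigD1 y) //= eqxx mul1r big1 ?addr0 // => x /negbTE->.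
  by rewrite mul0r.
transitivity (\sum_x \sum_w (J w y)%:R * ((J w x)%:R * g x)).
  apply: eq_bigr => x _; rewrite /overlap card_set_sum natr_sum mulr_suml.
  by apply: eq_bigr => w _; rewrite mulrA -natrM mulnb.
by rewrite exchange_big /=; apply: eq_bigr => w _; rewrite mulr_sumr.
Qed.

Lemma gram_form (g : T -> C) :
  \sum_y (g y)^* * \sum_x gram y x * g x =
  \sum_y (g y)^* * g y +
    c * \sum_w (\sum_x (J w x)%:R * g x)^* * \sum_x (J w x)%:R * g x.
Proof.
under eq_bigr do rewrite gram_mulE mulrDr mulrCA.
rewrite big_split /= -mulr_sumr; congr (_ + c * _).
transitivity (\sum_y \sum_w (g y)^* * ((J w y)%:R * \sum_x (J w x)%:R * g x)).
  by apply: eq_bigr => y _; rewrite mulr_sumr.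
rewrite exchange_big /=; apply: eq_bigr => w _.
rewrite rmorph_sum mulr_suml; apply: eq_bigr => y _.
by rewrite rmorphM /= conjC_nat mulrCA mulrA.
Qed.

Hypothesis c_ge0 : 0 <= c.

Lemma gram_eigenvalue_ge1 (g : T -> C) (lam : C) :
  (forall y, \sum_x gram y x * g x = lam * g y) -> (exists y, g y != 0) ->
  1 <= lam.
Proof.
move=> eig [y0 gy0].
set S := \sum_y (g y)^* * g y.
set Q := \sum_w (\sum_x (J w x)%:R * g x)^* * \sum_x (J w x)%:R * g x.
have S_gt0 : 0 < S.
  rewrite /S (bigD1 y0) //=; apply: ltr_wpDr; last by rewrite mulrC mul_conjC_gt0.
  by apply: sumr_ge0 => y _; rewrite mulrC mul_conjC_ge0.
have Q_ge0 : 0 <= Q by apply: sumr_ge0 => w _; rewrite mulrC mul_conjC_ge0.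
have lamS : lam * S = S + c * Q.
  by rewrite -gram_form mulr_sumr; apply: eq_bigr => y _; rewrite eig mulrCA.
have -> : lam = 1 + c * Q / S.
  by apply: (mulIf (lt0r_neq0 S_gt0)); rewrite lamS mulrDl mul1r divfK ?lt0r_neq0.
by rewrite lerDl; apply: mulr_ge0; [exact: mulr_ge0 | rewrite invr_ge0 ltW].
Qed.

Lemma gram_mul_eq0 (g : T -> C) :
  (forall y, \sum_x gram y x * g x = 0) -> forall x, g x = 0.
Proof.
move=> ker x; apply/eqP/negPn/negP => gx.
suff : (1 : C) <= 0 by rewrite ler10.
by apply: (gram_eigenvalue_ge1 _ (ex_intro _ x gx)) => y; rewrite ker mul0r.
Qed.

Lemma gram_eigenvalue_bounds k L (g : T -> C) (lam : C) :
  (forall y, \sum_x gram y x * g x = lam * g y) -> (exists y, g y != 0) ->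
  (forall y, #|[set w | J w y]| = k) ->
  (forall y, (\sum_(x | x != y) overlap J y x)%N = L) ->
  1 + c * (k%:R - L%:R) <= lam <= 1 + c * (k + L)%:R.
Proof.
move=> eig gnz col row.
have lam_real : lam \is Num.real := ger1_real (gram_eigenvalue_ge1 eig gnz).
have [y] := gershgorin eig gnz.
have -> : gram y y = 1 + c * k%:R.
  rewrite /gram /overlap eqxx -(col y); congr (_ + c * _%:R).
  by apply: eq_card => w; rewrite !inE andbb.
have -> : \sum_(x | x != y) `|gram y x| = c * L%:R.
  rewrite -(row y) natr_sum mulr_sumr; apply: eq_bigr => x /negbTE xy.
  by rewrite /gram xy add0r ger0_norm ?mulr_ge0.
rewrite real_ler_distl; last first.
  by rewrite rpredB // rpredD ?rpred1 // rpredM ?realn // ger0_real.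
by rewrite natrD !mulrDr mulrN !addrA.
Qed.

End Gram.

Lemma gram_eigenvalue_real_bounds (R : rcfType) (T W : finType)
    (J : W -> T -> bool) (nu : R) k L (g : T -> R[i]) (lam : R[i]) :
  (forall y, \sum_x gram J (nu ^+ 2)%:C%C y x * g x = lam * g y) ->
  (exists y, g y != 0) ->
  (forall y, #|[set w | J w y]| = k) ->
  (forall y, (\sum_(x | x != y) overlap J y x)%N = L) ->
  exists r : R, lam = r%:C%C /\ 1 <= r /\
    1 + nu ^+ 2 * (k%:R - L%:R) <= r <= 1 + nu ^+ 2 * (k + L)%:R.
Proof.
move=> eig gnz col row.
have nu2_ge0 : 0 <= (nu ^+ 2)%:C%C :> R[i] by rewrite lecR sqr_ge0.
have lam_ge1 := gram_eigenvalue_ge1 nu2_ge0 eig gnz.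
have bounds := gram_eigenvalue_bounds nu2_ge0 eig gnz col row.
set r := complex.Re lam; have lamE : lam = r%:C%C by rewrite RRe_real ?ger1_real.
rewrite lamE in lam_ge1 bounds *; exists r; split=> //; split.
  by move: lam_ge1; rewrite [X in X <= _]/(1%:C%C) lecR.
move: bounds.
rewrite -!(rmorph_nat (real_complex R)) -rmorphB -!rmorphM.
by rewrite -(rmorph1 (real_complex R)) -!rmorphD !lecR.
Qed.

(** * One-electron states *)

Section OneElectron.
Variables (R : rcfType) (I E : finType).
Local Notation C := R[i].
Local Notation fock := (fock R I E).
Local Notation mode := (mode I E).
Local Notation site := (site I E).
Local Notation vac := (vac R I E).

Lemma scale_complexE (a x : C) : a *: x = a * x. Proof. by []. Qed.

Fact cop_is_linear (j : mode) : linear (@cop R I E j).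
Proof.
move=> a p q; apply/ffunP=> S; rewrite !ffunE; case: ifP => _.
  by rewrite scaler0 addr0.
by rewrite mulrDr scale_complexE mulrCA.
Qed.
HB.instance Definition _ (j : mode) :=
  GRing.isLinear.Build C fock fock *:%R (@cop R I E j) (cop_is_linear j).

Fact cdag_is_linear (j : mode) : linear (@cdag R I E j).
Proof.
move=> a p q; apply/ffunP=> S; rewrite !ffunE; case: ifP => _.
  by rewrite mulrDr scale_complexE mulrCA.
by rewrite scaler0 addr0.
Qed.
HB.instance Definition _ (j : mode) :=
  GRing.isLinear.Build C fock fock *:%R (@cdag R I E j) (cdag_is_linear j).

Lemma jwsign0 (j : mode) : jwsign R j set0 = 1.
Proof.
rewrite /jwsign (_ : [set k in set0 | _] = set0) ?cards0 ?expr0 //.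
by apply/setP => k; rewrite !inE.
Qed.

Lemma cdag_vac (j : mode) : cdag j vac = [ffun S => (S == [set j])%:R].
Proof.
apply/ffunP => S; rewrite !ffunE; case: ifPn => jS.
  case: (S =P [set j]) => [->|Sj]; first by rewrite setDv eqxx jwsign0 mulr1.
  rewrite (_ : (S :\ j == set0) = false) ?mulr0 //.
  by apply/negbTE/eqP => S0; apply: Sj; rewrite -(setD1K jS) S0 setU0.
by case: (S =P [set j]) => // Sj; move: jS; rewrite Sj set11.
Qed.

Lemma cop_cdag_vac (j k : mode) : cop j (cdag k vac) = (j == k)%:R *: vac.
Proof.
rewrite cdag_vac; apply/ffunP => S; rewrite !ffunE scale_complexE; case: ifP => jS.
  by rewrite (_ : (S == set0) = false) ?mulr0 //; apply/negbTE/set0Pn; exists j.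
case: (S =P set0) => [->|S0].
  rewrite setU0 jwsign0 mul1r mulr1.
  by congr (GRing.natmul _ (nat_of_bool _)); apply/eqP/eqP => [/set1_inj|->].
rewrite mulr0 (_ : (j |: S == [set k]) = false) ?mulr0 //.
apply/negbTE/eqP => jSk; have /set0Pn[x xS] : S != set0 by apply/eqP.
have : x \in [set k] by rewrite -jSk setU1r.
have : j \in [set k] by rewrite -jSk setU11.
by rewrite !inE => /eqP jk /eqP xk; move: jS; rewrite jk -xk xS.
Qed.

Definition ket (f : site -> C) : fock := \sum_r f r *: cdag (r, true) vac.

Lemma ket_sum (T : finType) (g : T -> C) (a : T -> site -> C) :
  \sum_q g q *: ket (a q) = ket (fun r => \sum_q g q * a q r).
Proof.
rewrite /ket; under eq_bigr do rewrite scaler_sumr.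
rewrite exchange_big /=; apply: eq_bigr => r _.
by rewrite scaler_suml; apply: eq_bigr => q _; rewrite scalerA.
Qed.

Lemma ket_eval f r : ket f [set (r, true)] = f r.
Proof.
rewrite /ket sum_ffunE (bigD1 r) //= big1 ?addr0.
  by rewrite ffunE cdag_vac ffunE eqxx scale_complexE mulr1.
move=> r' r'r; rewrite ffunE cdag_vac ffunE scale_complexE.
rewrite (_ : ([set (r, true)] == [set (r', true)]) = false) ?mulr0 //.
by apply/negbTE/eqP => /set1_inj [] /eqP; rewrite eq_sym (negbTE r'r).
Qed.

Lemma ket_inj f f' : ket f = ket f' -> f =1 f'.
Proof. by move=> ff' r; rewrite -!ket_eval ff'. Qed.

Lemma cop_ket (r : site) (sg : bool) f :
  cop (r, sg) (ket f) = (if sg then f r else 0) *: vac.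
Proof.
rewrite /ket linear_sum /=.
under eq_bigr do rewrite linearZ /= cop_cdag_vac scalerA.
rewrite -scaler_suml; congr (_ *: _); case: sg.
  rewrite (bigD1 r) //= eqxx mulr1 big1 ?addr0 // => r' r'r.
  by rewrite xpair_eqE eq_sym (negbTE r'r) mulr0.
by rewrite big1 // => r' _; rewrite xpair_eqE andbF mulr0.
Qed.

Variables (inc : I -> E -> bool) (nu : R).

Definition alpha (x : E) (r : site) : C :=
  match r with inl u => - nu%:C%C * (inc u x)%:R | inr y => (x == y)%:R end.
Definition beta (u : I) (r : site) : C :=
  match r with inl v => (u == v)%:R | inr x => nu%:C%C * (inc u x)%:R end.
(* A bilinear pairing; it is the inner product whenever [a] is real, as
   [alpha x] and [beta u] are. *)
Definition dot (a f : site -> C) : C := \sum_r a r * f r.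

Lemma dot_sum (T : finType) a (g : T -> C) (b : T -> site -> C) :
  dot a (fun r => \sum_q g q * b q r) = \sum_q g q * dot a (b q).
Proof.
rewrite /dot; under eq_bigr do rewrite mulr_sumr.
rewrite exchange_big /=; apply: eq_bigr => q _.
by rewrite mulr_sumr; apply: eq_bigr => r _; rewrite mulrCA.
Qed.

Lemma dot_alpha x f :
  dot (alpha x) f = f (inr x) - nu%:C%C * \sum_(u | inc u x) f (inl u).
Proof.
rewrite /dot big_sumType /= addrC; congr (_ + _).
  exact: sum_delta_mul.
rewrite mulr_sumr -sumrN [RHS]big_mkcond /=; apply: eq_bigr => u _.
by case: (inc u x); rewrite ?mulr1 ?mulr0 ?mul0r ?oppr0 // mulNr.
Qed.

Lemma dot_beta u f :
  dot (beta u) f = f (inl u) + nu%:C%C * \sum_(x | inc u x) f (inr x).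
Proof.
rewrite /dot big_sumType /=; congr (_ + _).
  exact: sum_delta_mul.
rewrite mulr_sumr [RHS]big_mkcond /=; apply: eq_bigr => x _.
by case: (inc u x); rewrite ?mulr1 ?mulr0 ?mul0r.
Qed.

Lemma dot_alpha_beta x u : dot (alpha x) (beta u) = 0.
Proof. by rewrite dot_alpha /= sum_cond_delta subrr. Qed.

Lemma dot_beta_alpha u x : dot (beta u) (alpha x) = 0.
Proof. by rewrite dot_beta /= sum_cond_delta mulNr addNr. Qed.

Lemma dot_alpha_alpha y x : dot (alpha y) (alpha x) = gram inc (nu ^+ 2)%:C%C y x.
Proof.
rewrite dot_alpha /gram /overlap /=; congr (_ + _).
rewrite card_set_sum natr_sum mulr_sumr big_mkcond mulr_sumr -sumrN /=.
apply: eq_bigr => u _; rewrite rmorphXn /= expr2.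
by case: (inc u y); case: (inc u x); rewrite /= ?mulr0 ?mulr1 ?oppr0 ?mulrN ?opprK.
Qed.

Lemma dot_beta_beta v u :
  dot (beta v) (beta u) = gram (fun x w => inc w x) (nu ^+ 2)%:C%C v u.
Proof.
rewrite dot_beta /gram /overlap /=; congr (_ + _).
rewrite card_set_sum natr_sum mulr_sumr big_mkcond mulr_sumr /=.
apply: eq_bigr => x _; rewrite rmorphXn /= expr2.
by case: (inc v x); case: (inc u x); rewrite /= ?mulr0 ?mulr1.
Qed.

Lemma adag_vac x : adag inc nu x true vac = ket (alpha x).
Proof.
rewrite /adag /ket big_sumType /= addrC; congr (_ + _).
  rewrite (bigD1 x) //= eqxx scale1r big1 ?addr0 // => y; rewrite eq_sym => /negbTE->.
  by rewrite scale0r.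
rewrite scaler_sumr -sumrN [LHS]big_mkcond /=; apply: eq_bigr => u _.
by case: (inc u x); rewrite ?mulr1 ?mulr0 ?scale0r ?oppr0 // scaleNr.
Qed.

Lemma bdag_vac u : bdag inc nu u true vac = ket (beta u).
Proof.
rewrite /bdag /ket big_sumType /=; congr (_ + _).
  rewrite (bigD1 u) //= eqxx scale1r big1 ?addr0 // => v; rewrite eq_sym => /negbTE->.
  by rewrite scale0r.
rewrite scaler_sumr [LHS]big_mkcond /=; apply: eq_bigr => x _.
by case: (inc u x); rewrite ?mulr1 ?mulr0 ?scale0r // scalerA.
Qed.

Lemma aop_ket x sg f :
  aop inc nu x sg (ket f) = (if sg then dot (alpha x) f else 0) *: vac.
Proof.
rewrite /aop cop_ket; under eq_bigr do rewrite cop_ket.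
case: sg; first by rewrite dot_alpha -scaler_suml scalerA scalerBl.
by rewrite big1 ?scaler0 ?subr0 // => u _; rewrite scale0r.
Qed.

Lemma bop_ket u sg f :
  bop inc nu u sg (ket f) = (if sg then dot (beta u) f else 0) *: vac.
Proof.
rewrite /bop cop_ket; under eq_bigr do rewrite cop_ket.
case: sg; first by rewrite dot_beta -scaler_suml scalerA scalerDl.
by rewrite big1 ?scaler0 ?addr0 // => x _; rewrite scale0r.
Qed.

Lemma adagZ x sg (a : C) psi : adag inc nu x sg (a *: psi) = a *: adag inc nu x sg psi.
Proof.
rewrite /adag linearZ /=; under eq_bigr do rewrite linearZ /=.
by rewrite -scaler_sumr scalerBr !scalerA mulrC.
Qed.

Lemma bdagZ u sg (a : C) psi : bdag inc nu u sg (a *: psi) = a *: bdag inc nu u sg psi.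
Proof.
rewrite /bdag linearZ /=; under eq_bigr do rewrite linearZ /=.
by rewrite -scaler_sumr scalerDr !scalerA mulrC.
Qed.

Lemma adag_aop_ket f :
  \sum_x \sum_sg adag inc nu x sg (aop inc nu x sg (ket f)) =
  \sum_x dot (alpha x) f *: ket (alpha x).
Proof.
apply: eq_bigr => x _.
by rewrite big_bool /= !aop_ket !adagZ adag_vac scale0r addr0.
Qed.

Lemma bdag_bop_ket f :
  \sum_u \sum_sg bdag inc nu u sg (bop inc nu u sg (ket f)) =
  \sum_u dot (beta u) f *: ket (beta u).
Proof.
apply: eq_bigr => u _.
by rewrite big_bool /= !bop_ket !bdagZ bdag_vac scale0r addr0.
Qed.

Lemma Ham_ket (t s U : R) f :
  Ham inc nu t s U (ket f) =
  - s%:C%C *: \sum_x dot (alpha x) f *: ket (alpha x) +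
  t%:C%C *: \sum_u dot (beta u) f *: ket (beta u).
Proof.
have interaction_ket0 r : numop (r, true) (numop (r, false) (ket f)) = 0.
  by rewrite /numop cop_ket scale0r !linear0.
rewrite /Ham adag_aop_ket bdag_bop_ket.
by rewrite (eq_bigr _ (fun r _ => interaction_ket0 r)) big1_eq scaler0 addr0.
Qed.

Lemma hL_ket (g : E -> C) :
  \sum_x g x *: adag inc nu x true vac = ket (fun r => \sum_x g x * alpha x r).
Proof. by rewrite -ket_sum; apply: eq_bigr => x _; rewrite adag_vac. Qed.

Lemma hU_ket (g : I -> C) :
  \sum_u g u *: bdag inc nu u true vac = ket (fun r => \sum_u g u * beta u r).
Proof. by rewrite -ket_sum; apply: eq_bigr => u _; rewrite bdag_vac. Qed.

Lemma Ham_hL (t s U : R) (g : E -> C) :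
  Ham inc nu t s U (\sum_x g x *: adag inc nu x true vac) =
  \sum_y (- s%:C%C * \sum_x gram inc (nu ^+ 2)%:C%C y x * g x) *:
    adag inc nu y true vac.
Proof.
rewrite hL_ket Ham_ket.
rewrite (_ : \sum_u _ *: ket (beta u) = 0) ?scaler0 ?addr0; last first.
  apply: big1 => u _; rewrite dot_sum big1 ?scale0r // => x _.
  by rewrite dot_beta_alpha mulr0.
rewrite scaler_sumr; apply: eq_bigr => y _; rewrite scalerA dot_sum adag_vac.
by congr ((_ * _) *: _); apply: eq_bigr => x _; rewrite dot_alpha_alpha mulrC.
Qed.

Lemma Ham_hU (t s U : R) (g : I -> C) :
  Ham inc nu t s U (\sum_u g u *: bdag inc nu u true vac) =
  \sum_v (t%:C%C * \sum_u gram (fun x w => inc w x) (nu ^+ 2)%:C%C v u * g u) *: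
    bdag inc nu v true vac.
Proof.
rewrite hU_ket Ham_ket.
rewrite (_ : \sum_x _ *: ket (alpha x) = 0) ?scaler0 ?add0r; last first.
  apply: big1 => x _; rewrite dot_sum big1 ?scale0r // => u _.
  by rewrite dot_alpha_beta mulr0.
rewrite scaler_sumr; apply: eq_bigr => v _; rewrite scalerA dot_sum bdag_vac.
by congr ((_ * _) *: _); apply: eq_bigr => u _; rewrite dot_beta_beta mulrC.
Qed.

Lemma hL_coef_inj (c d : E -> C) :
  \sum_y c y *: adag inc nu y true vac = \sum_y d y *: adag inc nu y true vac ->
  c =1 d.
Proof.
by rewrite !hL_ket => /ket_inj cd y; move: (cd (inr y)); rewrite /= !sum_mul_delta.
Qed.

Lemma hU_coef_inj (c d : I -> C) :
  \sum_v c v *: bdag inc nu v true vac = \sum_v d v *: bdag inc nu v true vac ->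
  c =1 d.
Proof.
by rewrite !hU_ket => /ket_inj cd v; move: (cd (inl v)); rewrite /= !sum_mul_delta.
Qed.

Lemma dotD a f f' : dot a (fun r => f r + f' r) = dot a f + dot a f'.
Proof. by rewrite /dot -big_split; apply: eq_bigr => r _; rewrite mulrDr. Qed.

Lemma ketD f f' : ket (fun r => f r + f' r) = ket f + ket f'.
Proof. by rewrite /ket -big_split; apply: eq_bigr => r _; rewrite scalerDl. Qed.

Lemma alpha_beta_free (g : E -> C) (h : I -> C) :
  (forall r, \sum_x g x * alpha x r + \sum_u h u * beta u r = 0) ->
  (forall x, g x = 0) /\ (forall u, h u = 0).
Proof.
move=> gh0; have nu2_ge0 : 0 <= (nu ^+ 2)%:C%C :> C by rewrite lecR sqr_ge0.
have dot0 a : dot a (fun r => \sum_x g x * alpha x r + \sum_u h u * beta u r) = 0.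
  by apply: big1 => r _; rewrite gh0 mulr0.
split.
  apply: (gram_mul_eq0 (J := inc) nu2_ge0) => y.
  rewrite -[RHS](dot0 (alpha y)) dotD !dot_sum [X in _ = _ + X]big1 ?addr0.
    by apply: eq_bigr => x _; rewrite dot_alpha_alpha mulrC.
  by move=> u _; rewrite dot_alpha_beta mulr0.
apply: (gram_mul_eq0 (J := fun x w => inc w x) nu2_ge0) => y.
rewrite -[RHS](dot0 (beta y)) dotD !dot_sum [X in _ = X + _]big1 ?add0r.
  by apply: eq_bigr => u _; rewrite dot_beta_beta mulrC.
by move=> x _; rewrite dot_beta_alpha mulr0.
Qed.

Lemma alpha_beta_span (f : site -> C) : exists (g : E -> C) (h : I -> C),
  forall r, f r = \sum_x g x * alpha x r + \sum_u h u * beta u r.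
Proof.
pose b q := match q with inl u => beta u | inr x => alpha x end.
have sumE (c : site -> C) r : \sum_q c q * b q r =
    \sum_x c (inr x) * alpha x r + \sum_u c (inl u) * beta u r.
  by rewrite big_sumType addrC.
have b_free c : (forall r, \sum_q c q * b q r = 0) -> forall q, c q = 0.
  move=> c0; have [] := @alpha_beta_free (fun x => c (inr x)) (fun u => c (inl u)).
    by move=> r; rewrite -sumE c0.
  by move=> cE cI [u|x]; [exact: cI | exact: cE].
have [c fc] := free_family_spans b_free f.
by exists (fun x => c (inr x)), (fun u => c (inl u)) => r; rewrite fc sumE.
Qed.

Lemma in_hL_in_h psi : in_hL inc nu psi -> in_h psi.
Proof. by case=> g ->; rewrite hL_ket; exists (fun r => \sum_x g x * alpha x r). Qed.

Lemma in_hU_in_h psi : in_hU inc nu psi -> in_h psi.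
Proof. by case=> g ->; rewrite hU_ket; exists (fun r => \sum_u g u * beta u r). Qed.

Lemma in_hL_hU_eq0 psi : in_hL inc nu psi -> in_hU inc nu psi -> psi = 0.
Proof.
case=> g -> [h gh]; suff g0 : forall x, g x = 0.
  by rewrite big1 // => x _; rewrite g0 scale0r.
move: gh; rewrite hL_ket hU_ket => /ket_inj gh.
have [] // := @alpha_beta_free g (fun u => - h u) => r.
move: (gh r) => /= ->; rewrite -big_split big1 // => u _.
by rewrite /= mulNr addrN.
Qed.

Lemma in_h_split psi : in_h psi ->
  exists phi1 phi2, in_hL inc nu phi1 /\ in_hU inc nu phi2 /\ psi = phi1 + phi2.
Proof.
case=> f ->; have [g [h fgh]] := alpha_beta_span f.
exists (\sum_x g x *: adag inc nu x true vac), (\sum_u h u *: bdag inc nu u true vac).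
split; first by exists g.
split; first by exists h.
by rewrite hL_ket hU_ket -ketD /ket; apply: eq_bigr => r _; rewrite fgh.
Qed.

End OneElectron.

(** * The Hamiltonian on h_L and h_U *)

Section InvariantSpan.
Variables (R : rcfType) (I E : finType) (inc : I -> E -> bool) (nu t s U : R).
Variables (T : finType) (b : T -> fock R I E) (G : T -> T -> R[i]) (kappa : R[i]).
Local Notation H := (Ham inc nu t s U).

(* [in_hL inc nu] and [in_hU inc nu] are, up to conversion, the [span]s of the
   [adag inc nu x true vac] and of the [bdag inc nu u true vac]. *)
Definition span (psi : fock R I E) : Prop :=
  exists g : T -> R[i], psi = \sum_q g q *: b q.

Hypothesis Ham_span : forall g : T -> R[i],
  H (\sum_q g q *: b q) = \sum_p (kappa * \sum_q G p q * g q) *: b p.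

Lemma span_Ham_stable psi : span psi -> span (H psi).
Proof. by case=> g ->; rewrite Ham_span; eexists. Qed.

Lemma diag_within_span :
  (forall p q, G p q = G q p) -> (forall p q, G p q \is Num.real) ->
  diag_within inc nu t s U span.
Proof.
move=> Gsym Greal; have [k [w [d [wG wspan]]]] := real_symmetric_eigenbasis Gsym Greal.
exists k, (fun i => \sum_q w i q *: b q), (fun i => kappa * d i); split.
  move=> i; split; first by exists (w i).
  by rewrite Ham_span scaler_sumr; apply: eq_bigr => p _; rewrite wG scalerA mulrA.
move=> _ [g ->]; have [c gc] := wspan g; exists c.
rewrite (eq_bigr (fun q => \sum_i (c i * w i q) *: b q)); last first.
  by move=> q _; rewrite gc scaler_suml.
rewrite exchange_big; apply: eq_bigr => i _; rewrite scaler_sumr.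
by apply: eq_bigr => q _; rewrite scalerA.
Qed.

Hypothesis span_coef_inj : forall c d : T -> R[i],
  \sum_q c q *: b q = \sum_q d q *: b q -> c =1 d.

Lemma eigval_within_span eps : kappa != 0 -> eigval_within inc nu t s U span eps ->
  exists2 g : T -> R[i], exists q, g q != 0 &
    forall p, \sum_q G p q * g q = eps / kappa * g p.
Proof.
move=> kappa_nz [_ [[g ->] [psi_nz Heps]]]; exists g.
  case: (pickP (fun q => g q != 0)) => [q gq | g0]; first by exists q.
  by case: psi_nz; apply: big1 => q _; move/negbFE/eqP: (g0 q) => ->; rewrite scale0r.
have coef : (fun p => kappa * \sum_q G p q * g q) =1 (fun p => eps * g p).
  apply: span_coef_inj; rewrite -Ham_span Heps scaler_sumr.
  by apply: eq_bigr => q _; rewrite scalerA.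
by move=> p; apply: (mulfI kappa_nz); rewrite mulrA mulrCA mulfV // mulr1 coef.
Qed.

End InvariantSpan.

Section EigenvalueBounds.
Variables (R : rcfType) (n m : nat) (I E : finType) (inc : I -> E -> bool).
Variables (t s U nu : R).
Hypothesis cardI : forall u : I, #|[set x | inc u x]| = n.
Hypothesis cardE : forall x : E, #|[set u | inc u x]| = m.

Lemma eigval_hL_bounds (x0 : E) (eps : R[i]) :
  0 < s -> eigval_within inc nu t s U (in_hL inc nu) eps ->
  exists r : R, eps = r%:C%C /\
    - (s * (1 + (m + ellL inc x0)%:R * nu ^+ 2)) <= r /\
    r <= Num.min 0 (- (s * (1 + (m%:R - (ellL inc x0)%:R) * nu ^+ 2))).
Proof.
move=> s_gt0 eig.
have s_nz : - s%:C%C != 0 :> R[i] by rewrite oppr_eq0 fmorph_eq0 gt_eqF.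
have [g gnz Gg] :=
  eigval_within_span (Ham_hL inc nu t s U) (@hL_coef_inj R I E inc nu) s_nz eig.
have row y : (\sum_(x | x != y) overlap inc y x)%N = ellL inc x0.
  by rewrite /ellL (overlap_row_sum cardE cardI) -(overlap_row_sum cardE cardI x0).
have [r [lamE [r_ge1 /andP [r_lo r_hi]]]] :=
  gram_eigenvalue_real_bounds Gg gnz cardE row.
exists (- (s * r)); split; first by rewrite rmorphN rmorphM /= -lamE -mulNr mulrC divfK.
split; first by rewrite lerN2 ler_pM2l // mulrC.
rewrite le_min oppr_le0 pmulr_rge0 ?(le_trans ler01) //=.
by rewrite lerN2 ler_pM2l // mulrC.
Qed.

Lemma eigval_hU_bounds (u0 : I) (eps : R[i]) :
  0 < t -> eigval_within inc nu t s U (in_hU inc nu) eps ->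
  exists r : R, eps = r%:C%C /\
    Num.max 0 (t * (1 + (n%:R - (ellU inc u0)%:R) * nu ^+ 2)) <= r /\
    r <= t * (1 + (n + ellU inc u0)%:R * nu ^+ 2).
Proof.
move=> t_gt0 eig; have t_nz : t%:C%C != 0 :> R[i] by rewrite fmorph_eq0 gt_eqF.
have [g gnz Gg] :=
  eigval_within_span (Ham_hU inc nu t s U) (@hU_coef_inj R I E inc nu) t_nz eig.
have row v : (\sum_(u | u != v) overlap (fun x w => inc w x) v u)%N = ellU inc u0.
  by rewrite /ellU (overlap_row_sum cardI cardE) -(overlap_row_sum cardI cardE u0).
have [r [lamE [r_ge1 /andP [r_lo r_hi]]]] :=
  gram_eigenvalue_real_bounds Gg gnz cardI row.
exists (t * r); split; first by rewrite rmorphM /= -lamE mulrC divfK.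
split; last by rewrite ler_pM2l // mulrC.
rewrite ge_max pmulr_rge0 ?(le_trans ler01) //=.
by rewrite ler_pM2l // mulrC.
Qed.

End EigenvalueBounds.

Theorem proposition1 (R : rcfType) (n m : nat) (I E : finType)
  (inc : I -> E -> bool) (t s U nu : R) :
  (2 <= n)%N -> (2 <= m)%N ->
  (forall u : I, #|[set x | inc u x]| = n) ->
  (forall x : E, #|[set u | inc u x]| = m) ->
  (forall p q : site I E, connect (adj inc) p q) ->
  0 < t -> 0 < s -> 0 < U -> 0 < nu ->
  let H := Ham inc nu t s U in
  let hL := in_hL inc nu in
  let hU := in_hU inc nu in
  let h := @in_h R I E in
  (* h = h_L (+) h_U *)
  ((forall psi, h psi -> exists phi1 phi2, hL phi1 /\ hU phi2 /\ psi = phi1 + phi2)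
   /\ (forall psi, hL psi -> h psi) /\ (forall psi, hU psi -> h psi)
   /\ (forall psi, hL psi -> hU psi -> psi = 0)) /\
  (* invariance and diagonalizability *)
  (forall psi, hL psi -> hL (H psi)) /\ (forall psi, hU psi -> hU (H psi)) /\
  diag_within inc nu t s U hL /\ diag_within inc nu t s U hU /\
  (* eigenvalue bounds *)
  (forall (x0 : E) (eps : R[i]), eigval_within inc nu t s U hL eps ->
     exists r : R, eps = (r%:C)%C /\
       - (s * (1 + (m + ellL inc x0)%:R * nu ^+ 2)) <= r /\
       r <= Num.min 0 (- (s * (1 + (m%:R - (ellL inc x0)%:R) * nu ^+ 2)))) /\
  (forall (u0 : I) (eps : R[i]), eigval_within inc nu t s U hU eps ->
     exists r : R, eps = (r%:C)%C /\
       Num.max 0 (t * (1 + (n%:R - (ellU inc u0)%:R) * nu ^+ 2)) <= r /\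
       r <= t * (1 + (n + ellU inc u0)%:R * nu ^+ 2)).
Proof.
move=> _ _ cardI cardE _ t_gt0 s_gt0 _ _ /=.
have nu2_real : (nu ^+ 2)%:C%C \is @Num.real R[i].
  by apply/complex_realP; exists (nu ^+ 2).
have HL := Ham_hL inc nu t s U; have HU := Ham_hU inc nu t s U.
split; first by do ![split];
  [exact: in_h_split | exact: in_hL_in_h | exact: in_hU_in_h | exact: in_hL_hU_eq0].
split; first exact: span_Ham_stable HL.
split; first exact: span_Ham_stable HU.
split; first exact: diag_within_span HL (gram_sym _ _) (gram_real _ nu2_real).
split; first exact: diag_within_span HU (gram_sym _ _) (gram_real _ nu2_real).
split=> [x0 eps | u0 eps].
  exact: (eigval_hL_bounds cardI cardE).
exact: (eigval_hU_bounds cardI cardE).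
Qed.
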